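(* If $M\subseteq\mathbb{N}$ is a finite strongly 3-separating set, then there exists $x\in\mathbb{N}\setminus M$ such that $M\cup\{x\}$ is also strongly 3-separating.
   Context: $\mathbb{N}=\{1,2,3,\dots\}$. A set $M\subseteq\mathbb{N}$ is 3-separating if $|M|\geq 3$ and for any two triples $(m_1,m_2,m_3)$ and $(n_1,n_2,n_3)$, each consisting of three distinct elements of $M$, we have $n_2(m_3-m_1)=n_1(m_3-m_2)+n_3(m_2-m_1)$ if and only if $(m_1,m_2,m_3)=(n_1,n_2,n_3)$. A set $M$ is strongly 3-separating if it is 3-separating and moreover for any two pairs $(m_1,m_2)$, $(n_1,n_2)$, each consisting of two distinct elements of $M$, we have $m_1-m_2+n_2-n_1=0$ if and only if $(m_1,m_2)=(n_1,n_2)$. *)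

From HB Require Import structures.
From mathcomp Require Import all_boot all_order all_algebra.
From mathcomp Require Import finmap.
Set Implicit Arguments. Unset Strict Implicit. Unset Printing Implicit Defensive.
Import Order.TTheory GRing.Theory Num.Theory.
Local Open Scope fset_scope.
Local Open Scope ring_scope.

Definition three_separating (M : {fset nat}) : Prop :=
  (3 <= #|` M|)%N /\
  forall m1 m2 m3 n1 n2 n3 : nat,
    m1 \in M -> m2 \in M -> m3 \in M ->
    m1 != m2 -> m1 != m3 -> m2 != m3 ->
    n1 \in M -> n2 \in M -> n3 \in M ->
    n1 != n2 -> n1 != n3 -> n2 != n3 ->
    ((n2%:Z * (m3%:Z - m1%:Z) = n1%:Z * (m3%:Z - m2%:Z) + n3%:Z * (m2%:Z - m1%:Z))
     <-> (m1, m2, m3) = (n1, n2, n3)).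

Definition strongly_three_separating (M : {fset nat}) : Prop :=
  three_separating M /\
  forall m1 m2 n1 n2 : nat,
    m1 \in M -> m2 \in M -> m1 != m2 ->
    n1 \in M -> n2 \in M -> n1 != n2 ->
    ((m1%:Z - m2%:Z + n2%:Z - n1%:Z = 0) <-> (m1, m2) = (n1, n2)).

From mathcomp Require Import all_boot all_order all_algebra.
From mathcomp Require Import finmap zify ring.
Set Implicit Arguments.
Unset Strict Implicit.
Unset Printing Implicit Defensive.
Import GRing.Theory.

(* Add a point x much larger than every element of M.  The separating
   equation says that the three points (m_i, n_i) of the plane are collinear,
   i.e. that the determinant [area2] vanishes.  If x occurs in the triples,
   this determinant is a polynomial in x with a nonzero coefficient of x or
   x^2, hence does not vanish, unless x occurs at the same position in both
   triples; then the vanishing of the x-coefficient is a coincidence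
   a - b = c - d of differences in M, which the strong condition (M is a
   Sidon set) excludes.  Likewise differences involving x are too large to
   coincide with differences inside M. *)

Local Open Scope ring_scope.

Definition area2 (m1 m2 m3 n1 n2 n3 : int) : int :=
  n1 * (m3 - m2) + n3 * (m2 - m1) - n2 * (m3 - m1).

Section Area2.
Variables m1 m2 m3 n1 n2 n3 : int.

Lemma area2C : area2 n1 n2 n3 m1 m2 m3 = - area2 m1 m2 m3 n1 n2 n3.
Proof. by rewrite /area2; ring. Qed.

Lemma area2_perm12 : area2 m2 m1 m3 n2 n1 n3 = - area2 m1 m2 m3 n1 n2 n3.
Proof. by rewrite /area2; ring. Qed.

Lemma area2_perm23 : area2 m1 m3 m2 n1 n3 n2 = - area2 m1 m2 m3 n1 n2 n3.
Proof. by rewrite /area2; ring. Qed.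

End Area2.

Section FarArea2.
Variables (K x : nat).

Lemma area2_corner_far (a b c d : nat) :
  (K * K < x)%N -> (a <= K)%N -> (b <= K)%N -> (c <= K)%N -> (d <= K)%N ->
  area2 x a b x c d = 0 -> (a + d = b + c)%N.
Proof.
have -> : area2 x a b x c d =
    d%:Z * a%:Z - c%:Z * b%:Z - x%:Z * (a%:Z + d%:Z - b%:Z - c%:Z).
  by rewrite /area2; ring.
nia.
Qed.

Lemma area2_edge_far (a b c d e : nat) :
  (2 * K * K < x)%N -> (a <= K)%N -> (b <= K)%N -> (c <= K)%N ->
  (d <= K)%N -> (e <= K)%N -> d != e -> area2 x a b c d e != 0.
Proof.
have -> : area2 x a b c d e =
    x%:Z * (d%:Z - e%:Z) + (c%:Z * b%:Z + e%:Z * a%:Z - c%:Z * a%:Z - d%:Z * b%:Z).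
  by rewrite /area2; ring.
nia.
Qed.

Lemma area2_two_edges_far (a b c d : nat) :
  (2 * K < x)%N -> (K * K < x)%N ->
  (a <= K)%N -> (b <= K)%N -> (c <= K)%N -> (d <= K)%N ->
  area2 x a b c x d != 0.
Proof.
have -> : area2 x a b c x d =
    x%:Z * (x%:Z - b%:Z - d%:Z) + (c%:Z * b%:Z + d%:Z * a%:Z - c%:Z * a%:Z).
  by rewrite /area2; ring.
nia.
Qed.

End FarArea2.

Local Open Scope fset_scope.

Definition distinct3 (a b c : nat) := [&& a != b, a != c & b != c].

Definition triple_in (A : {fset nat}) (a b c : nat) :=
  [&& a \in A, b \in A, c \in A & distinct3 a b c].

Definition triple_separated (A : {fset nat}) (m1 m2 m3 n1 n2 n3 : nat) :=
  triple_in A m1 m2 m3 -> triple_in A n1 n2 n3 ->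
  area2 m1 m2 m3 n1 n2 n3 = 0 -> (m1, m2, m3) = (n1, n2, n3).

Definition sidon (A : {fset nat}) :=
  forall m1 m2 n1 n2 : nat,
    m1 \in A -> m2 \in A -> m1 != m2 -> n1 \in A -> n2 \in A -> n1 != n2 ->
    (m1 + n2 = m2 + n1)%N -> (m1, m2) = (n1, n2).

Lemma three_separatingP (A : {fset nat}) :
  three_separating A <->
  (3 <= #|` A|)%N /\ forall m1 m2 m3 n1 n2 n3, triple_separated A m1 m2 m3 n1 n2 n3.
Proof.
have collinearE (m1 m2 m3 n1 n2 n3 : int) :
    (n2 * (m3 - m1) = n1 * (m3 - m2) + n3 * (m2 - m1))%R <-> area2 m1 m2 m3 n1 n2 n3 = 0.
  split=> [E|/eqP]; first by rewrite /area2 E subrr.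
  by rewrite /area2 subr_eq0 eq_sym => /eqP.
split=> -[card3 sep]; split=> // m1 m2 m3 n1 n2 n3.
  move=> /and4P[m1A m2A m3A /and3P[m12 m13 m23]].
  move=> /and4P[n1A n2A n3A /and3P[n12 n13 n23]] /collinearE.
  exact: (iffLR (sep m1 m2 m3 n1 n2 n3
                      m1A m2A m3A m12 m13 m23 n1A n2A n3A n12 n13 n23)).
move=> m1A m2A m3A m12 m13 m23 n1A n2A n3A n12 n13 n23.
split=> [/collinearE|[-> -> ->]]; last by ring.
by apply: sep; apply/and4P; split=> //; apply/and3P.
Qed.

Lemma strongly_three_separatingP (A : {fset nat}) :
  strongly_three_separating A <-> three_separating A /\ sidon A.
Proof.
split=> -[sep3 sid]; split=> // m1 m2 n1 n2 m1A m2A m12 n1A n2A n12.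
  by move=> sum; apply/(sid m1 m2 n1 n2) => //; lia.
by split=> [sum|[-> ->]]; [apply: sid => //; lia | ring].
Qed.

Lemma triple_in_perm12 A a b c : triple_in A b a c = triple_in A a b c.
Proof.
rewrite /triple_in /distinct3 (eq_sym b a).
by case: (a \in A); case: (b \in A); case: (a == b); case: (a == c); case: (b == c).
Qed.

Lemma triple_in_perm23 A a b c : triple_in A a c b = triple_in A a b c.
Proof.
rewrite /triple_in /distinct3 (eq_sym c b).
by case: (b \in A); case: (c \in A); case: (a == b); case: (a == c); case: (b == c).
Qed.

Section TripleSeparatedSym.
Variables (A : {fset nat}) (m1 m2 m3 n1 n2 n3 : nat).

Lemma triple_separatedC :
  triple_separated A n1 n2 n3 m1 m2 m3 -> triple_separated A m1 m2 m3 n1 n2 n3.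
Proof.
move=> sep mA nA z; have [-> -> ->] // : (n1, n2, n3) = (m1, m2, m3).
by apply: sep; rewrite // area2C z oppr0.
Qed.

Lemma triple_separated_perm12 :
  triple_separated A m2 m1 m3 n2 n1 n3 -> triple_separated A m1 m2 m3 n1 n2 n3.
Proof.
move=> sep mA nA z; have [-> -> ->] // : (m2, m1, m3) = (n2, n1, n3).
by apply: sep; rewrite 1?triple_in_perm12 // area2_perm12 z oppr0.
Qed.

Lemma triple_separated_perm23 :
  triple_separated A m1 m3 m2 n1 n3 n2 -> triple_separated A m1 m2 m3 n1 n2 n3.
Proof.
move=> sep mA nA z; have [-> -> ->] // : (m1, m3, m2) = (n1, n3, n2).
by apply: sep; rewrite 1?triple_in_perm23 // area2_perm23 z oppr0.
Qed.

End TripleSeparatedSym.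

Lemma fset1U_neq (T : choiceType) (x y : T) (A : {fset T}) :
  y \in x |` A -> x != y -> y \in A.
Proof. by rewrite in_fset1U eq_sym => /orP[/eqP->|//]; rewrite eqxx. Qed.

Section AddFarPoint.
Variables (M : {fset nat}) (K x : nat).
Hypothesis M_le_K : forall m, m \in M -> (m <= K)%N.
Hypothesis x_far : (2 * K * K + 2 * K < x)%N.

Lemma fset1U_farP y : y \in x |` M -> y = x \/ y \in M /\ (y <= K)%N.
Proof. by case/fset1UP=> [|yM]; [left | right; split=> //; apply: M_le_K]. Qed.

Lemma sidon_fset1U : sidon M -> sidon (x |` M).
Proof.
move=> sidM m1 m2 n1 n2.
move=> /fset1U_farP[->|[m1M m1K]] /fset1U_farP[->|[m2M m2K]] m12.
all: move=> /fset1U_farP[->|[n1M n1K]] /fset1U_farP[->|[n2M n2K]] n12 sum.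
all: try exact: sidM.
(* A sum involving x balances another one only if x occurs on both sides. *)
all: by apply/eqP; rewrite xpair_eqE; lia.
Qed.

Lemma triple_in_fset1U a b c :
  x \notin [:: a; b; c] -> triple_in (x |` M) a b c -> triple_in M a b c.
Proof.
rewrite !inE !negb_or.
move=> /and3P[xa xb xc] /and4P[aP bP cP abc].
by apply/and4P; split; rewrite // (fset1U_neq aP, fset1U_neq bP, fset1U_neq cP).
Qed.

Hypothesis sepM : forall m1 m2 m3 n1 n2 n3, triple_separated M m1 m2 m3 n1 n2 n3.
Hypothesis sidM : sidon M.

Lemma triple_separated_far_first m2 m3 n1 n2 n3 :
  triple_separated (x |` M) x m2 m3 n1 n2 n3.
Proof.
move=> /and4P[_ m2P m3P /and3P[xm2 xm3 m23]].
move=> /and4P[n1P n2P n3P /and3P[n12 n13 n23]] z.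
have m2M := fset1U_neq m2P xm2; have m3M := fset1U_neq m3P xm3.
have x2K : (2 * K < x)%N by lia.
have xKK : (K * K < x)%N by lia.
have x2KK : (2 * K * K < x)%N by lia.
have [xn1|xn1] := eqVneq x n1.
  rewrite -xn1 in n1P n12 n13 z *.
  have n2M := fset1U_neq n2P n12; have n3M := fset1U_neq n3P n13.
  have sum := area2_corner_far xKK
    (M_le_K m2M) (M_le_K m3M) (M_le_K n2M) (M_le_K n3M) z.
  by case: (sidM m2M m3M m23 n2M n3M n23 sum) => -> ->.
have n1M := fset1U_neq n1P xn1.
have [xn2|xn2] := eqVneq x n2.
  rewrite -xn2 in n23 z; have n3M := fset1U_neq n3P n23.
  have := area2_two_edges_far x2K xKK
    (M_le_K m2M) (M_le_K m3M) (M_le_K n1M) (M_le_K n3M).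
  by rewrite z eqxx.
have n2M := fset1U_neq n2P xn2.
have [xn3|xn3] := eqVneq x n3.
  rewrite -xn3 in z.
  have := area2_two_edges_far x2K xKK
    (M_le_K m3M) (M_le_K m2M) (M_le_K n1M) (M_le_K n2M).
  by rewrite area2_perm23 z oppr0 eqxx.
have n3M := fset1U_neq n3P xn3.
have := area2_edge_far x2KK
  (M_le_K m2M) (M_le_K m3M) (M_le_K n1M) (M_le_K n2M) (M_le_K n3M) n23.
by rewrite z eqxx.
Qed.

Lemma triple_separated_fset1U m1 m2 m3 n1 n2 n3 :
  triple_separated (x |` M) m1 m2 m3 n1 n2 n3.
Proof.
have far_in_m m1' m2' m3' n1' n2' n3' : x \in [:: m1'; m2'; m3'] ->
    triple_separated (x |` M) m1' m2' m3' n1' n2' n3'.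
  rewrite !inE => /or3P[/eqP<-|/eqP<-|/eqP<-].
  - exact: triple_separated_far_first.
  - by apply: triple_separated_perm12; apply: triple_separated_far_first.
  - apply: triple_separated_perm23; apply: triple_separated_perm12.
    exact: triple_separated_far_first.
have [xm|xNm] := boolP (x \in [:: m1; m2; m3]); first exact: far_in_m.
have [xn|xNn] := boolP (x \in [:: n1; n2; n3]).
  by apply: triple_separatedC; apply: far_in_m.
by move=> /(triple_in_fset1U xNm) mM /(triple_in_fset1U xNn) nM; apply: sepM.
Qed.

End AddFarPoint.

Theorem lemma2p4 (M : {fset nat}) :
  (forall m, m \in M -> (0 < m)%N) ->
  strongly_three_separating M ->
  exists x : nat, (0 < x)%N /\ x \notin M /\ strongly_three_separating (x |` M).
Proof.
move=> _ /strongly_three_separatingP[/three_separatingP[card3 sepM] sidM].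
pose K := (\max_(m <- M) m)%N.
have M_le_K m : m \in M -> (m <= K)%N by move=> mM; apply: leq_bigmax_seq.
pose x := (2 * K * K + 2 * K).+1.
have x_far : (2 * K * K + 2 * K < x)%N by [].
have xNM : x \notin M by apply/negP => /M_le_K; lia.
exists x; split=> //; split=> //.
apply/strongly_three_separatingP; split; last exact: (sidon_fset1U M_le_K x_far).
apply/three_separatingP; split; first by rewrite cardfsU1 xNM; apply: leqW.
exact: (triple_separated_fset1U M_le_K x_far sepM sidM).
Qed.
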